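(* Let $X$ be a metric space. For $g\in\mathfrak{S}^\infty(\mathfrak{C}X)$ define $\mathsf{dist}\,g := \lambda\varepsilon.\ \mathsf{map}\,(\lambda x.\,x\,\varepsilon)\,g$. Then $\mathsf{dist}\,g\in\mathfrak{C}(\mathfrak{S}^\infty X)$, and $\mathsf{dist}:\mathfrak{S}^\infty(\mathfrak{C}X)\to\mathfrak{C}(\mathfrak{S}^\infty X)$ is uniformly continuous. Consequently, for every uniformly continuous $f:\mathbb{Q}\to\mathbb{R}$ (where $\mathbb{R}:=\mathfrak{C}\mathbb{Q}$), the composite $\mathsf{dist}\circ(\mathsf{map}\ f):\mathfrak{S}^\infty\mathbb{Q}\to\mathfrak{C}(\mathfrak{S}^\infty\mathbb{Q})$ is uniformly continuous.
   Context: Step functions. For a type $X$, $\mathfrak{S}X$ is the inductive type of (formal, rational) step functions on $[0,1]$: constructors $\mathsf{const}\ x$ ($x\in X$, written $\hat x$) and $\mathsf{glue}\ o\ f\ g$ ($o\in(0,1)\cap\mathbb{Q}$, $f,g\in\mathfrak{S}X$). Split. For $a\in(0,1)\cap\mathbb{Q}$: $\mathsf{SplitL}\ \hat x\ a := \hat x$, $\mathsf{SplitR}\ \hat x\ a:=\hat x$, and $\mathsf{SplitL}(\mathsf{glue}\ o\ f_l\ f_r)\ a :=$ $\mathsf{SplitL}\ f_l\ (a/o)$ if $a<o$; $f_l$ if $a=o$; $\mathsf{glue}\ (o/a)\ f_l\ (\mathsf{SplitL}\ f_r\ \tfrac{a-o}{1-o})$ if $a>o$. $\mathsf{SplitR}(\mathsf{glue}\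 o\ f_l\ f_r)\ a :=$ $\mathsf{glue}\ \tfrac{o-a}{1-a}\ (\mathsf{SplitR}\ f_l\ (a/o))\ f_r$ if $a<o$; $f_r$ if $a=o$; $\mathsf{SplitR}\ f_r\ \tfrac{a-o}{1-o}$ if $a>o$. Map and ap. $\mathsf{map}\ \varphi\ \hat x := \widehat{\varphi x}$, $\mathsf{map}\ \varphi\ (\mathsf{glue}\ o\ f\ g):=\mathsf{glue}\ o\ (\mathsf{map}\ \varphi\ f)(\mathsf{map}\ \varphi\ g)$; $\varphi\circ x:=\mathsf{map}\ \varphi\ x$. $\hat\varphi @ x := \mathsf{map}\ \varphi\ x$, $(\mathsf{glue}\ o\ F_l\ F_r) @ x := \mathsf{glue}\ o\ (F_l @ \mathsf{SplitL}\ x\ o)\ (F_r @ \mathsf{SplitR}\ x\ o)$. Fold. $\mathsf{fold}\ \varphi\ \psi\ \hat x:=\varphi x$, $\mathsf{fold}\ \varphi\ \psi\ (\mathsf{glue}\ o\ f\ g) := \psi\ o\ (\mathsf{fold}\ \varphi\ \psi\ f)(\mathsf{fold}\ \varphi\ \psi\ g)$; $\mathsf{fold}_\star := \mathsf{fold}\ \mathrm{id}\ (\lambda o\,p\,q.\ p\wedge q)$. Metric spaces: setoids with a respectful ball relation $\mathbf{B}_\varepsilon x\,y$ ($\varepsilon\in\mathbb{Q}^+$) satisfying reflexivity, symmetry, triangle inequality $\mathbf{B}_{\varepsilon_1}xy\wedge\mathbf{B}_{\varepsilon_2}yz\Rightarrow\mathbf{B}_{\varepsilon_1+\varepsilon_2}xz$,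 closedness ($(\forall\delta>\varepsilon.\mathbf{B}_\delta xy)\Rightarrow\mathbf{B}_\varepsilon xy$) and separation ($(\forall\varepsilon.\mathbf{B}_\varepsilon xy)\Rightarrow x\asymp y$). $\mathbb{Q}$ has $\mathbf{B}_\varepsilon x\,y:=|x-y|\le\varepsilon$. For a metric space $X$, $\mathfrak{S}^\infty X$ is $\mathfrak{S}X$ with ball $\mathbf{B}_\varepsilon f\,g := \mathsf{fold}_\star(\mathbf{B}^X_\varepsilon\circ f @ g)$. Completion. $\mathfrak{C}X$ is the set of functions $x:\mathbb{Q}^+\to X$ with $\mathbf{B}^X_{\varepsilon_1+\varepsilon_2}(x\varepsilon_1)(x\varepsilon_2)$ for all $\varepsilon_1,\varepsilon_2$, with ball $\mathbf{B}_\varepsilon x\,y := \forall\delta_1\delta_2\in\mathbb{Q}^+.\ \mathbf{B}^X_{\delta_1+\varepsilon+\delta_2}(x\delta_1)(y\delta_2)$ (and $x\asymp y$ iff $\mathbf{B}_\varepsilon xy$ for all $\varepsilon$). $\mathbb{R}:=\mathfrak{C}\mathbb{Q}$. Uniform continuity: $F:X\to Y$ is uniformly continuous if there is $\mu:\mathbb{Q}^+\to\mathbb{Q}^+$ with $\mathbf{B}^X_{\mu\varepsilon}x_1x_2\Rightarrow\mathbf{B}^Y_\varepsilon(Fx_1)(Fx_2)$. *)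

From HB Require Import structures.
From mathcomp Require Import all_boot all_order all_algebra.
Unset Printing Implicit Defensive.
Import Order.TTheory GRing.Theory Num.Theory.
Local Open Scope ring_scope.

(* The ball is given on all of [rat]; only its values at positive radii
   matter, all axioms and all uses quantify over positive radii. *)
Record MetricSpace := {
  ms_car :> Type;
  ms_eq : ms_car -> ms_car -> Prop;
  ms_ball : rat -> ms_car -> ms_car -> Prop;
  ms_eq_refl : forall x, ms_eq x x;
  ms_eq_sym : forall x y, ms_eq x y -> ms_eq y x;
  ms_eq_trans : forall x y z, ms_eq x y -> ms_eq y z -> ms_eq x z;
  ms_ball_resp : forall e x x' y y', 0 < e -> ms_eq x x' -> ms_eq y y' ->
      ms_ball e x y -> ms_ball e x' y';
  ms_ball_refl : forall e x, 0 < e -> ms_ball e x x;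
  ms_ball_sym : forall e x y, 0 < e -> ms_ball e x y -> ms_ball e y x;
  ms_ball_triangle : forall e1 e2 x y z, 0 < e1 -> 0 < e2 ->
      ms_ball e1 x y -> ms_ball e2 y z -> ms_ball (e1 + e2) x z;
  ms_ball_closed : forall e x y, 0 < e ->
      (forall d, e < d -> ms_ball d x y) -> ms_ball e x y;
  ms_ball_eq : forall x y, (forall e, 0 < e -> ms_ball e x y) -> ms_eq x y
}.

Definition Qball (e x y : rat) : Prop := `|x - y| <= e.

Definition OU := {o : rat | (0 : rat) < o < 1}.
Lemma half_OU : (0 : rat) < (1 / 2 : rat) < 1.
Proof. by rewrite divr_gt0 // ltr_pdivrMr // mul1r ltr1n. Qed.
Definition OUhalf : OU := exist _ (1 / 2 : rat) half_OU.
(* [mkOU x] is x when 0 < x < 1 (the only case used below) *)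
Definition mkOU (x : rat) : OU := insubd OUhalf x.

Inductive Step (X : Type) : Type :=
| sconst : X -> Step X
| glue : OU -> Step X -> Step X -> Step X.
Arguments sconst {X} _.
Arguments glue {X} _ _ _.

Fixpoint SplitL {X : Type} (f : Step X) (a : OU) : Step X :=
  match f with
  | sconst x => sconst x
  | glue o fl fr =>
      let a' := val a in let o' := val o in
      if a' < o' then SplitL fl (mkOU (a' / o'))
      else if a' == o' then fl
      else glue (mkOU (o' / a')) fl (SplitL fr (mkOU ((a' - o') / (1 - o'))))
  end.

Fixpoint SplitR {X : Type} (f : Step X) (a : OU) : Step X :=
  match f with
  | sconst x => sconst x
  | glue o fl fr =>
      let a' := val a in let o' := val o in
      if a' < o' then glue (mkOU ((o' - a') / (1 - a'))) (SplitR fl (mkOU (a' / o'))) fr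
      else if a' == o' then fr
      else SplitR fr (mkOU ((a' - o') / (1 - o')))
  end.

Fixpoint smap {X Y : Type} (phi : X -> Y) (f : Step X) : Step Y :=
  match f with
  | sconst x => sconst (phi x)
  | glue o fl fr => glue o (smap phi fl) (smap phi fr)
  end.

Fixpoint sap {X Y : Type} (F : Step (X -> Y)) (x : Step X) : Step Y :=
  match F with
  | sconst phi => smap phi x
  | glue o Fl Fr => glue o (sap Fl (SplitL x o)) (sap Fr (SplitR x o))
  end.

Fixpoint sfold {X Y : Type} (phi : X -> Y) (psi : OU -> Y -> Y -> Y) (f : Step X) : Y :=
  match f with
  | sconst x => phi x
  | glue o fl fr => psi o (sfold phi psi fl) (sfold phi psi fr)
  end.

Definition fold_star (f : Step Prop) : Prop := sfold id (fun _ p q => p /\ q) f.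

Definition ballS {T : Type} (b : rat -> T -> T -> Prop) (e : rat) (f g : Step T) : Prop :=
  fold_star (sap (smap (b e) f) g).

Definition regular {T : Type} (b : rat -> T -> T -> Prop) (x : rat -> T) : Prop :=
  forall e1 e2, 0 < e1 -> 0 < e2 -> b (e1 + e2) (x e1) (x e2).

Definition ballC {T : Type} (b : rat -> T -> T -> Prop) (e : rat) (x y : rat -> T) : Prop :=
  forall d1 d2, 0 < d1 -> 0 < d2 -> b (d1 + e + d2) (x d1) (y d2).

Definition Compl {T : Type} (b : rat -> T -> T -> Prop) := {x : rat -> T | regular b x}.

Definition ballCompl {T : Type} (b : rat -> T -> T -> Prop) (e : rat) (x y : Compl b) : Prop :=
  ballC b e (sval x) (sval y).

Definition Real := Compl Qball.

Definition unif_cont {A B : Type} (bA : rat -> A -> A -> Prop) (bB : rat -> B -> B -> Prop)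
  (F : A -> B) : Prop :=
  exists mu : rat -> rat, (forall e, 0 < e -> 0 < mu e) /\
    forall e x1 x2, 0 < e -> bA (mu e) x1 x2 -> bB e (F x1) (F x2).

Definition distS {T : Type} {b : rat -> T -> T -> Prop} (g : Step (Compl b)) : rat -> Step T :=
  fun e => smap (fun x : Compl b => sval x e) g.

From HB Require Import structures.
From mathcomp Require Import all_boot all_order all_algebra.
Import Order.TTheory GRing.Theory Num.Theory.
Local Open Scope ring_scope.

(* The ball of S^oo T is [fold_star (sap (smap (b e) f) g)]:
   it evaluates a relation on the common refinement of f and g.  The only
   structural fact needed is a transport principle: splitting commutes with
   [smap], so if maps p, q send G-related points to F-related points, then
   they send step functions whose G-relation holds everywhere to step
   functions whose F-relation holds everywhere (fold_star_sap_transport).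
   With it, both claims about [distS] are pointwise statements about regular
   functions, and they hold for an arbitrary ball relation (no metric axioms
   are used):
   - [distS g] is regular because each x : C X is (relate g with itself by
     equality, then transport along evaluation at e1 and e2);
   - [distS] is uniformly continuous with modulus id, since the ball of C X
     is pointwise the ball at every pair of approximation indices.
   The same transport shows that [smap] preserves uniform continuity; the
   final statement is then a composition of uniformly continuous maps. *)

Lemma smap_comp {A B C : Type} (p : A -> B) (q : B -> C) (f : Step A) :
  smap q (smap p f) = smap (fun x => q (p x)) f.
Proof. by elim: f => [x|o fl IHl fr IHr] //=; rewrite IHl IHr. Qed.

(* Splitting only looks at the tree shape, so it commutes with [smap]. *)
Lemma SplitL_smap {A B : Type} (q : A -> B) (g : Step A) (a : OU) :
  SplitL (smap q g) a = smap q (SplitL g a).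
Proof.
elim: g a => [x|o gl IHl gr IHr] a //=.
case: ifP => _; first exact: IHl.
by case: ifP => _ //=; rewrite IHr.
Qed.

Lemma SplitR_smap {A B : Type} (q : A -> B) (g : Step A) (a : OU) :
  SplitR (smap q g) a = smap q (SplitR g a).
Proof.
elim: g a => [x|o gl IHl gr IHr] a //=.
by case: ifP => _; [rewrite IHl | case: ifP].
Qed.

Lemma fold_star_smap_impl {A : Type} (P Q : A -> Prop) (g : Step A) :
  (forall y, P y -> Q y) -> fold_star (smap P g) -> fold_star (smap Q g).
Proof.
move=> PQ; elim: g => [x|o gl IHl gr IHr] /=; first exact: PQ.
by case=> /IHl ? /IHr ?.
Qed.

Lemma fold_star_sap_transport {A B A' B' : Type}
    (G : A -> B -> Prop) (F : A' -> B' -> Prop) (p : A -> A') (q : B -> B')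
    (f : Step A) (g : Step B) :
  (forall x y, G x y -> F (p x) (q y)) ->
  fold_star (sap (smap G f) g) -> fold_star (sap (smap F (smap p f)) (smap q g)).
Proof.
move=> GF; elim: f g => [x|o fl IHl fr IHr] g /=.
  by rewrite smap_comp; apply: fold_star_smap_impl => y; apply: GF.
by rewrite SplitL_smap SplitR_smap; case=> /IHl ? /IHr ?.
Qed.

Lemma fold_star_sap_eq {A : Type} (g : Step A) :
  fold_star (sap (smap (fun x y : A => x = y) g) g).
Proof. by elim: g => [x|o gl IHl gr IHr] //=; rewrite ltxx eqxx. Qed.

Lemma distS_regular {T : Type} (b : rat -> T -> T -> Prop) (g : Step (Compl b)) :
  regular (ballS b) (distS g).
Proof.
move=> e1 e2 e1_gt0 e2_gt0.
apply: (fold_star_sap_transport (fun x y : Compl b => x = y)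
          _ _ _ _ _ _ (fold_star_sap_eq g)).
by move=> [x x_reg] _ <-; apply: x_reg.
Qed.

Lemma distS_unif_cont {T : Type} (b : rat -> T -> T -> Prop) :
  unif_cont (ballS (ballCompl b)) (ballC (ballS b)) (@distS T b).
Proof.
exists id; split=> // e g1 g2 _ g12 d1 d2 d1_gt0 d2_gt0.
apply: (fold_star_sap_transport (ballCompl b e) _ _ _ _ _ _ g12).
by move=> x y xy; apply: xy.
Qed.

Lemma smap_unif_cont {A B : Type} {bA : rat -> A -> A -> Prop}
    {bB : rat -> B -> B -> Prop} {F : A -> B} :
  unif_cont bA bB F -> unif_cont (ballS bA) (ballS bB) (smap F).
Proof.
case=> mu [mu_gt0 F_uc]; exists mu; split=> // e s1 s2 e_gt0 s12.
apply: (fold_star_sap_transport (bA (mu e)) _ _ _ _ _ _ s12).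
by move=> x y; apply: F_uc.
Qed.

Lemma unif_cont_comp {A B C : Type} {bA : rat -> A -> A -> Prop}
    {bB : rat -> B -> B -> Prop} {bC : rat -> C -> C -> Prop}
    {F : A -> B} {G : B -> C} :
  unif_cont bA bB F -> unif_cont bB bC G -> unif_cont bA bC (fun x => G (F x)).
Proof.
case=> muF [muF_gt0 F_uc] [muG [muG_gt0 G_uc]].
exists (fun e => muF (muG e)); split=> [e e_gt0|e x1 x2 e_gt0 x12].
  by apply/muF_gt0/muG_gt0.
by apply: G_uc => //; apply: F_uc => //; apply: muG_gt0.
Qed.

Theorem mainTheorem14 :
  (forall X : MetricSpace,
     (forall g : Step (Compl (ms_ball X)), regular (ballS (ms_ball X)) (distS g)) /\
     unif_cont (ballS (ballCompl (ms_ball X))) (ballC (ballS (ms_ball X)))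
               (@distS X (ms_ball X))) /\
  (forall f : rat -> Real, unif_cont Qball (ballCompl Qball) f ->
     unif_cont (ballS Qball) (ballC (ballS Qball))
               (fun s : Step rat => @distS rat Qball (smap f s))).
Proof.
split=> [X | f f_uc].
  by split; [exact: distS_regular | exact: distS_unif_cont].
exact: (unif_cont_comp (smap_unif_cont f_uc) (distS_unif_cont Qball)).
Qed.
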